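(* Let $\mathbf{X}$ be a Banach space and $\emptyset\ne\mathcal{S}\subset\mathbf{X}$. Assume that either 1. $\mathcal{S}$ is closed, bounded and convex; or 2. $\mathcal{S}=\{\mathbf{x}\in\mathbf{X}:\|\mathbf{x}\|_\ast\le r\}$ for some $r\in(0,\infty)$ and a map $\|\cdot\|_\ast:\mathbf{X}\to[0,\infty]$ such that (a) there is $\kappa\ge1$ with $\|\alpha\mathbf{x}\|_\ast=|\alpha|\|\mathbf{x}\|_\ast$ and $\|\mathbf{x}+\mathbf{y}\|_\ast\le\kappa(\|\mathbf{x}\|_\ast+\|\mathbf{y}\|_\ast)$ for all $\alpha\in\mathbb{R}$, $\mathbf{x},\mathbf{y}\in\mathbf{X}$; (b) there is $C\ge1$ with $\|\mathbf{x}\|_{\mathbf{X}}\le C\|\mathbf{x}\|_\ast$ for all $\mathbf{x}\in\mathbf{X}$; (c) $\mathcal{S}\subset\mathbf{X}$ is closed; (d) $\|\mathbf{x}\|_\ast\to\|\mathbf{x}_0\|_\ast$ whenever $\|\mathbf{x}-\mathbf{x}_0\|_\ast\to0$. Set $s^\ast:=s^\ast_{\mathbf{X}}(\mathcal{S})$. Then for each codec $\mathcal{C}=((E_R,D_R))_{R\in\mathbb{N}}$ there is $\mathbf{x}=\mathbf{x}(\mathcal{C})\in\mathcal{S}$ such that for each $\ell\in\mathbb{N}$, $\|\mathbf{x}-D_R(E_R(\mathbf{x}))\|_{\mathbf{X}}\ge R^{-(s^\ast+\ell^{-1})}$ for infinitely many $R\in\mathbb{N}$.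
   Context: For a real Banach space $\mathbf{X}$ and $\mathcal{S}\subset\mathbf{X}$: a codec is a sequence $((E_R,D_R))_{R\in\mathbb{N}}$ of maps $E_R:\mathcal{S}\to\{0,1\}^R$, $D_R:\{0,1\}^R\to\mathbf{X}$; distortion $\delta_{\mathcal{S},\mathbf{X}}(E_R,D_R)=\sup_{\mathbf{x}\in\mathcal{S}}\|\mathbf{x}-D_R(E_R(\mathbf{x}))\|_{\mathbf{X}}$; optimal compression rate $s^\ast_{\mathbf{X}}(\mathcal{S})=\sup\{s\ge0:\exists\text{ codec with }\sup_RR^s\delta_{\mathcal{S},\mathbf{X}}(E_R,D_R)<\infty\}\in[0,\infty]$. *)

From HB Require Import structures.
From mathcomp Require Import all_boot all_order all_algebra.
From mathcomp Require Import all_classical all_reals all_analysis.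
Set Implicit Arguments. Unset Strict Implicit. Unset Printing Implicit Defensive.
Import Order.TTheory GRing.Theory Num.Theory numFieldNormedType.Exports.
Local Open Scope classical_set_scope.
Local Open Scope ring_scope.

(* A codec: for each bit budget R, an encoder X -> {0,1}^R and a decoder
   {0,1}^R -> X.  Encoders are total functions on X; only their values on S
   matter. *)
Definition encoders (X : Type) := forall n : nat, X -> n.-tuple bool.
Definition decoders (X : Type) := forall n : nat, n.-tuple bool -> X.

Definition distortion {R : realType} {X : normedModType R} (S : set X)
  (E : encoders X) (D : decoders X) (n : nat) : \bar R :=
  ereal_sup [set (`|x - D n (E n x)|)%:E | x in S].

Definition achievable_rate {R : realType} {X : normedModType R} (S : set X)
  (s : R) : Prop :=
  exists (E : encoders X) (D : decoders X) (M : R),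
    forall n : nat, (0 < n)%N ->
      ((n%:R `^ s)%:E * distortion S E D n <= M%:E)%E.

(* optimal compression rate s^*_X(S) in [0, +oo] (as an extended real;
   sup of the empty set is -oo, which cannot happen for bounded nonempty S) *)
Definition opt_rate {R : realType} {X : normedModType R} (S : set X) : \bar R :=
  ereal_sup [set s%:E | s in [set s : R | 0 <= s /\ achievable_rate S s]].

Definition rate_bound {R : realType} (s : \bar R) (l n : nat) : \bar R :=
  match s with
  | EFin r => (n%:R `^ (- (r + l%:R^-1)))%:E
  | +oo%E => 0%E
  | -oo%E => +oo%E
  end.

From HB Require Import structures.
From mathcomp Require Import all_boot all_order all_algebra.
From mathcomp Require Import all_classical all_reals all_analysis.
From mathcomp Require Import lra.
Set Implicit Arguments. Unset Strict Implicit. Unset Printing Implicit Defensive.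
Import Order.TTheory GRing.Theory Num.Theory numFieldNormedType.Exports.
Local Open Scope classical_set_scope.
Local Open Scope ring_scope.

(* S is closed, bounded and locally self-similar: arbitrarily close to each of
   its points it contains a small homothetic copy a + t S of itself (by
   convexity, resp. by shrinking towards the centre of the quasi-norm ball and
   using the continuity of the quasi-norm).  If the points that the codec
   encodes with error below n^-(s* + 1/(k+1)) for all n > k were dense in some
   ball of S, composing the codec with such a homothety would encode all of S
   at the rate s* + 1/(k+1) > s*, which is impossible.  These sets are thus
   nowhere dense in S, and the Baire category theorem in the complete metric
   space S provides a point lying in none of them. *)

Section nested_balls.
Context {R : realType} {X : completeNormedModType R}.
Context {a : nat -> X} {r : nat -> R}.
Hypothesis r_gt0 : forall n, 0 < r n.
Hypothesis nested : forall n, `|a n - a n.+1| + r n.+1 <= r n.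
Hypothesis r_cvg0 : r @ \oo --> 0.

Lemma nested_ball_le n m w : (n <= m)%N -> `|a m - w| <= r m -> `|a n - w| <= r n.
Proof.
elim: m => [|m IHm]; first by rewrite leqn0 => /eqP ->.
rewrite leq_eqVlt => /orP[/eqP -> //|]; rewrite ltnS => nm wm; apply: IHm => //.
rewrite -(subrK (a m.+1) (a m)) -addrA (le_trans (ler_normD _ _)) //.
by rewrite (le_trans _ (nested m)) // lerD2l.
Qed.

Lemma nested_ball_center n m : (n <= m)%N -> `|a n - a m| <= r n.
Proof. by move=> nm; apply: (@nested_ball_le n m (a m) nm); rewrite subrr normr0 ltW. Qed.

Lemma nested_balls_cvg : exists l, a @ \oo --> l /\ forall n, `|a n - l| <= r n.
Proof.
have /cvg_ex[l a_l] : cvg (a @ \oo).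
  apply: cauchy_cvg; apply/cauchy_exP => e e0.
  have [N _ rN] := cvgr0_norm_lt _ r_cvg0 _ e0.
  exists (a N), N => // m /= Nm; rewrite -ball_normE /=.
  rewrite (le_lt_trans (@nested_ball_center N m Nm)) //.
  by rewrite -[r N]ger0_norm ?ltW //; apply: rN => /=.
exists l; split => // n.
have : closed_ball (a n) (r n) l.
  apply: (closed_cvg _ (@closed_ball_closed _ _ (a n) (r n)) _ _ a_l).
  by exists n => // m /= nm; rewrite closed_ballE //; exact: nested_ball_center.
by rewrite closed_ballE.
Qed.

End nested_balls.

Section nowhere_dense_in.
Context {R : realType} {X : normedModType R}.

Definition nowhere_dense_in (S A : set X) :=
  forall y e, S y -> 0 < e -> exists z d, [/\ S z, `|y - z| <= e, 0 < d, d <= e &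
    forall w, S w -> `|z - w| <= d -> ~ A w].

End nowhere_dense_in.

Section closed_Baire.
Context {R : realType} {X : completeNormedModType R}.

Lemma closed_Baire (S : set X) (A : nat -> set X) : closed S -> S !=set0 ->
  (forall k, nowhere_dense_in S (A k)) -> exists2 x, S x & forall k, ~ A k x.
Proof.
move=> cS [y0 Sy0] ndA.
pose Q k (p q : X * R) := [/\ S q.1, `|p.1 - q.1| <= p.2, 0 < q.2, q.2 <= p.2 &
  forall w, S w -> `|q.1 - w| <= q.2 -> ~ A k w].
have /choice[f Qf] : forall kp : nat * (X * R),
    exists q, S kp.2.1 -> 0 < kp.2.2 -> Q kp.1 kp.2 q.
  move=> [k [y e]]; have [[Sy e0]|nSe] := pselect (S y /\ 0 < e).
    by have [z [d Qzd]] := ndA k y e Sy e0; exists (z, d).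
  by exists (y, e) => Sy e0; exfalso; apply: nSe.
(* Radii at least halve and stay below 1/(n+1): the closed balls are nested
   and shrink to a point. *)
pose shrink (q : X * R) m := (q.1, Num.min (q.2 / 2) (harmonic m.+1)).
pose fix ar n := f (n, if n is m.+1 then shrink (ar m) m else (y0, 1)).
pose prev n := if n is m.+1 then shrink (ar m) m else (y0, 1).
have Qar n : Q n (prev n) (ar n).
  elim: n => [|n [San _ rn0 _ _]]; first exact: (Qf (0%N, (y0, 1))).
  by apply: (Qf (n.+1, shrink (ar n) n)) => //=; rewrite lt_min divr_gt0 ?harmonic_gt0.
pose a n := (ar n).1; pose r n := (ar n).2.
have r_gt0 n : 0 < r n by case: (Qar n).
have nested n : `|a n - a n.+1| + r n.+1 <= r n.
  have := Qar n.+1; rewrite /Q /= !le_min => -[_ /andP[an _] _ /andP[rn _] _].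
  by rewrite [leRHS]splitr lerD.
have r_le n : r n <= harmonic n.
  case: n => [|n]; first by have [_ _ _ + _] := Qar 0%N; rewrite /= invr1.
  by have := Qar n.+1; rewrite /Q /= !le_min => -[_ _ _ /andP[]].
have r_cvg0 : r @ \oo --> 0.
  apply: (@squeeze_cvgr _ _ _ _ (cst 0) harmonic); last exact: cvg_harmonic.
    by apply: nearW => n; rewrite ltW //= r_le.
  exact: cvg_cst.
have [l [a_l al]] := nested_balls_cvg r_gt0 nested r_cvg0.
have Sl : S l.
  apply: (closed_cvg _ cS _ _ a_l).
  by apply: nearW => n; case: (Qar n).
by exists l => // k; have [_ _ _ _] := Qar k; apply => //; exact: al.
Qed.

End closed_Baire.

Lemma finite_nat_ubound (A : set nat) :
  finite_set A -> exists N, forall n, A n -> (n < N)%N.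
Proof.
move=> /finite_fsetP[F ->]; exists (\max_(i <- finmap.enum_fset F) i).+1 => n /= nF.
by rewrite ltnS (@leq_bigmax_seq _ _ xpredT id n nF).
Qed.

Section rates.
Context {R : realType} {X : normedModType R}.
Implicit Types (S : set X) (E : encoders X) (D : decoders X).

Lemma achievable_rate_le_opt S s : 0 <= s -> achievable_rate S s ->
  (s%:E <= opt_rate S)%E.
Proof. by move=> s0 As; apply: ereal_sup_ubound; exists s. Qed.

Lemma achievable_rate_eventually S E D (B C s : R) (k : nat) :
  0 <= s -> 0 <= B -> (forall x, S x -> `|x| <= B) ->
  (forall n x, (k < n)%N -> S x -> `|x - D n (E n x)| <= C * n%:R `^ (- s)) ->
  achievable_rate S s.
Proof.
move=> s0 B0 SB ED.
pose D' : decoders X := fun n b => if (k < n)%N then D n b else 0.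
exists E, D', (Num.max (k%:R `^ s * B) C) => n n0.
pose bound := if (k < n)%N then C * n%:R `^ (- s) else B.
have dist_le : (distortion S E D' n <= bound%:E)%E.
  apply: ge_ereal_sup => _ [x Sx <-]; rewrite lee_fin /D' /bound.
  by case: ifP => kn; [exact: ED | rewrite subr0 SB].
apply: le_trans (lee_wpmul2l _ dist_le) _; first by rewrite lee_fin powR_ge0.
rewrite -EFinM lee_fin le_max /bound; case: ifP => kn.
  by rewrite mulrCA powRN mulfV ?mulr1 ?lexx ?orbT // gt_eqF // powR_gt0 // ltr0n.
rewrite ler_wpM2r // ge0_ler_powR // ?nnegrE ?ler0n // ler_nat.
by rewrite leqNgt kn.
Qed.

Lemma achievable_rate0 S (B : R) : 0 <= B -> (forall x, S x -> `|x| <= B) ->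
  achievable_rate S 0.
Proof.
move=> B0 SB; apply: (@achievable_rate_eventually S (fun n _ => nseq_tuple n false)
  (fun _ _ => 0) B B 0 0%N (lexx 0) B0 SB) => n x _ Sx.
by rewrite subr0 oppr0 powRr0 mulr1 SB.
Qed.

Lemma achievable_rate_homothety S E D (B s t : R) (k : nat) (a : X) :
  0 <= s -> 0 <= B -> (forall x, S x -> `|x| <= B) -> 0 < t ->
  (forall n x, (k < n)%N -> S x -> exists2 w,
     `|a + t *: x - w| <= t * n%:R `^ (- s) & `|w - D n (E n w)| <= n%:R `^ (- s)) ->
  achievable_rate S s.
Proof.
move=> s0 B0 SB t0 approx.
have /choice[g gP] : forall nx : nat * X, exists w, (k < nx.1)%N -> S nx.2 ->
    `|a + t *: nx.2 - w| <= t * nx.1%:R `^ (- s) /\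
    `|w - D nx.1 (E nx.1 w)| <= nx.1%:R `^ (- s).
  move=> [n x]; have [[kn Sx]|nkS] := pselect ((k < n)%N /\ S x).
    by have [w ? ?] := approx n x kn Sx; exists w.
  by exists 0 => kn Sx; exfalso; apply: nkS.
apply: (@achievable_rate_eventually S (fun n x => E n (g (n, x)))
  (fun n b => t^-1 *: (D n b - a)) B (1 + t^-1) s k s0 B0 SB) => n x kn Sx.
have [ax_w w_D] := gP (n, x) kn Sx; move: ax_w w_D => /=; set w := g (n, x).
set u := a + t *: x - w; set v := w - D n (E n w) => u_le v_le.
have -> : x - t^-1 *: (D n (E n w) - a) = t^-1 *: (u + v).
  rewrite /u /v addrA subrK scalerBr [RHS]scalerBr scalerDr scalerA.
  by rewrite mulVf ?gt_eqF // scale1r opprB [_ + x]addrC addrA.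
rewrite normrZ gtr0_norm ?invr_gt0 // ler_pdivrMl //.
rewrite mulrA mulrDr mulr1 mulfV ?gt_eqF //.
have := ler_normD u v; lra.
Qed.

End rates.

Section self_similar.
Context {R : realType} {X : normedModType R}.

Lemma bounded_set_ubound (S : set X) : bounded_set S ->
  exists2 B, 0 <= B & forall x, S x -> `|x| <= B.
Proof.
case=> M [_ SM]; exists (`|M| + 1) => [|x Sx]; first by rewrite addr_ge0.
by apply: (SM (`|M| + 1)) => //; rewrite (le_lt_trans (ler_norm M)) // ltrDl.
Qed.

Definition locally_self_similar (S : set X) :=
  forall y e, S y -> 0 < e -> exists a t, 0 < t /\
    forall x, S x -> S (a + t *: x) /\ `|y - (a + t *: x)| < e.

Lemma locally_self_similar_shrink (S : set X) (B : R) :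
  0 <= B -> (forall x, S x -> `|x| <= B) ->
  (forall y c, S y -> 0 < c <= 1 ->
     exists2 t, 0 < t <= c & forall x, S x -> S ((1 - c) *: y + t *: x)) ->
  locally_self_similar S.
Proof.
move=> B0 SB shrink y e Sy e0.
(* [2 c B < e] keeps the copy [(1 - c) y + t S], [t <= c], within e of y. *)
pose c := e / (2 * B + e).
have Be0 : 0 < 2 * B + e by rewrite ltr_wpDl // mulr_ge0.
have c0 : 0 < c by rewrite divr_gt0.
have cBe : 2 * (c * B) + c * e = e by rewrite mulrCA -mulrDr divfK ?gt_eqF.
have c1 : c <= 1.
  rewrite -(ler_pM2r e0) mul1r.
  by have := mulr_ge0 (ltW c0) B0; lra.
have [t /andP[t0 tc] St] := shrink y c Sy (introT andP (conj c0 c1)).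
exists ((1 - c) *: y), t; split => // x Sx; split; first exact: St.
have -> : y - ((1 - c) *: y + t *: x) = c *: y - t *: x.
  by rewrite scalerBl scale1r opprD opprB addrCA addrA subrK.
apply: le_lt_trans (ler_normB _ _) _; rewrite [`|c *: _|]normrZ [`|t *: _|]normrZ.
rewrite (gtr0_norm c0) (gtr0_norm t0).
have := ler_wpM2l (ltW c0) (SB y Sy); have := ler_wpM2l (ltW t0) (SB x Sx).
by have := ler_wpM2r B0 tc; have := mulr_gt0 c0 e0; lra.
Qed.

Lemma convex_locally_self_similar (S : set X) (B : R) :
  0 <= B -> (forall x, S x -> `|x| <= B) ->
  convex_set (S : set (convex_lmodType X)) -> locally_self_similar S.
Proof.
move=> B0 SB cvS; apply: (locally_self_similar_shrink B0 SB).
move=> y c Sy /andP[c0 c1]; exists c => [|x Sx]; first by rewrite c0 lexx.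
have := cvS x y (Itv01 (ltW c0) c1); rewrite !inE => /(_ Sx Sy).
by rewrite addrC.
Qed.

Section quasinorm_ball.
Variables (nstar : X -> \bar R) (r : R).
Hypothesis r_gt0 : 0 < r.
Hypothesis nstar_ge0 : forall x, (0 <= nstar x)%E.
Hypothesis nstarZ : forall (a : R) x, nstar (a *: x) = (`|a|%:E * nstar x)%E.
Hypothesis nstar_cvg : forall (u : nat -> X) x0,
  (fun n => nstar (u n - x0)) @ \oo --> 0%E -> (fun n => nstar (u n)) @ \oo --> nstar x0.

Lemma quasinorm_ball_bounded (C : R) : 0 <= C ->
  (forall x, (`|x|%:E <= C%:E * nstar x)%E) ->
  forall x, (nstar x <= r%:E)%E -> `|x| <= C * r.
Proof.
by move=> C0 hC x xr; rewrite -lee_fin EFinM (le_trans (hC x)) // lee_wpmul2l ?lee_fin.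
Qed.

Lemma quasinorm_ball_absorbs (a : X) (tau : R) : (nstar a < r%:E)%E -> 0 < tau ->
  exists2 t, 0 < t <= tau &
    forall x, (nstar x <= r%:E)%E -> (nstar (a + t *: x)%R <= r%:E)%E.
Proof.
(* Otherwise some a + t_m x_m with t_m -> 0 leaves the ball, although
   nstar (t_m x_m) <= t_m r -> 0 forces nstar (a + t_m x_m) -> nstar a < r. *)
move=> ar tau0; apply: contrapT => no_t.
have /choice[xs xsP] : forall m, exists x,
    (nstar x <= r%:E)%E /\ (r%:E < nstar (a + (tau * harmonic m) *: x)%R)%E.
  move=> m; apply: contrapT => no_x; apply: no_t; exists (tau * harmonic m).
    by rewrite mulr_gt0 ?harmonic_gt0 //= ger_pMr // invf_le1 // ler1n.
  by move=> x xr; rewrite leNgt; apply/negP => rlt; apply: no_x; exists x.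
pose u m := a + (tau * harmonic m) *: xs m.
have u_a : (fun m => nstar (u m - a)) @ \oo --> 0%E.
  apply: (@squeeze_cvge _ _ _ _ (cst 0%E) _ (fun m => (tau * r * harmonic m)%:E)).
  - apply: nearW => m; rewrite nstar_ge0 /= /u addrC addKr nstarZ.
    rewrite gtr0_norm ?mulr_gt0 ?harmonic_gt0 // [tau * r * _]mulrAC.
    rewrite [(_ * r)%:E]EFinM lee_wpmul2l //; last by case: (xsP m).
    by rewrite lee_fin mulr_ge0 ?harmonic_ge0 ?ltW.
  - exact: cvg_cst.
  - apply: cvg_EFin; first exact: nearW.
    by rewrite -(mulr0 (tau * r)); apply: cvgMl_tmp; exact: cvg_harmonic.
have [N _ uN] := nstar_cvg u_a (open_ereal_lt' ar).
by have [_] := xsP N; rewrite ltNge => /negP; apply; apply: ltW; apply: uN => /=.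
Qed.

Lemma quasinorm_ball_locally_self_similar (B : R) : 0 <= B ->
  (forall x, (nstar x <= r%:E)%E -> `|x| <= B) ->
  locally_self_similar [set x | (nstar x <= r%:E)%E].
Proof.
move=> B0 SB; apply: (locally_self_similar_shrink B0 SB).
move=> y c yr /andP[c0 c1].
have ar : (nstar ((1 - c) *: y) < r%:E)%E.
  rewrite nstarZ ger0_norm ?subr_ge0 //.
  apply: le_lt_trans (lee_wpmul2l _ yr) _; first by rewrite lee_fin subr_ge0.
  by rewrite -EFinM lte_fin; have := mulr_gt0 c0 r_gt0; lra.
by have [t tc ?] := quasinorm_ball_absorbs ar c0; exists t.
Qed.

End quasinorm_ball.
End self_similar.

Section codec_lower_bound.
Context {R : realType} {X : normedModType R}.
Implicit Types (S : set X) (E : encoders X) (D : decoders X).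

Definition coded_at_rate E D (s : R) (k : nat) (w : X) :=
  forall n, (k < n)%N -> `|w - D n (E n w)| < n%:R `^ (- s).

Lemma coded_at_rate_nowhere_dense S E D (B s : R) (k : nat) :
  0 <= s -> 0 <= B -> (forall x, S x -> `|x| <= B) -> locally_self_similar S ->
  ~ achievable_rate S s -> nowhere_dense_in S (coded_at_rate E D s k).
Proof.
move=> s0 B0 SB ssS notA y e Sy e0; apply: contrapT => dense.
have [a [t [t0 aS]]] := ssS y e Sy e0.
apply/notA/(achievable_rate_homothety (k := k) (a := a) s0 B0 SB t0) => n x kn Sx.
have [Sz zy] := aS x Sx; set z := a + t *: x in Sz zy *.
have p0 : 0 < t * n%:R `^ (- s) by rewrite mulr_gt0 // powR_gt0 // ltr0n (leq_ltn_trans _ kn).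
apply: contrapT => no_w; apply: dense; exists z, (Num.min e (t * n%:R `^ (- s))).
split => //; [exact: ltW | by rewrite lt_min e0 | by rewrite ge_min lexx |].
move=> w Sw zw wC; apply: no_w; exists w; last exact/ltW/wC.
by rewrite (le_trans zw) // ge_min lexx orbT.
Qed.

Lemma not_coded_infinite E D (s : R) (x : X) :
  (forall k, ~ coded_at_rate E D (s + k.+1%:R^-1) k x) ->
  forall l, (0 < l)%N ->
    infinite_set [set n | n%:R `^ (- (s + l%:R^-1)) <= `|x - D n (E n x)|].
Proof.
move=> not_coded l l0 /finite_nat_ubound[N bad_ltN].
apply: (not_coded (maxn l N)) => n kn.
have lk : (l <= (maxn l N).+1)%N by rewrite leqW // leq_maxl.
rewrite (@lt_le_trans _ _ (n%:R `^ (- (s + l%:R^-1)))) //.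
  rewrite ltNge; apply/negP => /bad_ltN; rewrite ltnNge.
  by rewrite (leq_trans (leq_maxr l N) (ltnW kn)).
rewrite ler_powR ?ler1n ?(leq_ltn_trans _ kn) //.
by rewrite lerN2 lerD2l lef_pV2 ?posrE ?ltr0n // ler_nat.
Qed.

End codec_lower_bound.

Lemma self_similar_codec_lower_bound {R : realType} {X : completeNormedModType R}
    (S : set X) (E : encoders X) (D : decoders X) (B : R) :
  closed S -> S !=set0 -> 0 <= B -> (forall x, S x -> `|x| <= B) ->
  locally_self_similar S ->
  exists2 x, S x & forall l, (0 < l)%N ->
    infinite_set [set n | (rate_bound (opt_rate S) l n <= (`|x - D n (E n x)|)%:E)%E].
Proof.
move=> cS S0 B0 SB ssS.
have := achievable_rate_le_opt (lexx 0) (achievable_rate0 B0 SB).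
case opt_s : (opt_rate S) => [s | | //] s0; last first.
  have [y Sy] := S0; exists y => // l _.
  by apply: sub_infinite_set infinite_nat => n _ /=; rewrite lee_fin.
rewrite lee_fin in s0.
have sk_ge0 k : 0 <= s + k.+1%:R^-1 by rewrite addr_ge0 ?invr_ge0.
have s_lt k : ~ achievable_rate S (s + k.+1%:R^-1).
  move/(achievable_rate_le_opt (sk_ge0 k)); rewrite opt_s lee_fin gerDl leNgt.
  by rewrite invr_gt0 ltr0n.
have [x Sx not_coded] := closed_Baire cS S0 (fun k =>
  coded_at_rate_nowhere_dense E D k (sk_ge0 k) B0 SB ssS (s_lt k)).
exists x => // l l0; apply: sub_infinite_set (not_coded_infinite not_coded l0).
by move=> n /=; rewrite lee_fin.
Qed.

Theorem propositionG1 (R : realType) (X : completeNormedModType R) (S : set X) :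
  S !=set0 ->
  ( (closed S /\ bounded_set S /\ convex_set (S : set (convex_lmodType X)))
    \/
    (exists (nstar : X -> \bar R) (r kappa C : R),
        0 < r /\ 1 <= kappa /\ 1 <= C /\
        (forall x, (0 <= nstar x)%E) /\
        S = [set x | (nstar x <= r%:E)%E] /\
        (forall (a : R) x, nstar (a *: x)%R = (`|a|%:E * nstar x)%E) /\
        (forall x y, (nstar (x + y)%R <= kappa%:E * (nstar x + nstar y))%E) /\
        (forall x, ((`|x|)%:E <= C%:E * nstar x)%E) /\
        closed S /\
        (forall (u : nat -> X) (x0 : X),
            (fun n => nstar (u n - x0)%R) @ \oo --> 0%E ->
            (fun n => nstar (u n)) @ \oo --> nstar x0)) ) ->
  forall (E : encoders X) (D : decoders X),
    exists x, S x /\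
      forall l : nat, (0 < l)%N ->
        infinite_set [set n : nat |
          (rate_bound (opt_rate S) l n <= (`|x - D n (E n x)|)%:E)%E].
Proof.
move=> S0 hyp E D.
have [B [B0 SB cS ssS]] : exists B, [/\ 0 <= B, forall x, S x -> `|x| <= B,
    closed S & locally_self_similar S].
  case: hyp => [[cS [/bounded_set_ubound[B B0 SB] cvS]]|
    [nstar [r [_ [C [r0 [_ [C1 [nstar_ge0 [-> [nstarZ [_ [hC [cS nstar_cvg]]]]]]]]]]]]]].
    by exists B; split => //; exact: convex_locally_self_similar B0 SB cvS.
  have C0 : 0 <= C := le_trans ler01 C1.
  have CrB := quasinorm_ball_bounded (r := r) C0 hC.
  have Cr0 : 0 <= C * r by rewrite mulr_ge0 // ltW.
  exists (C * r); split => //.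
  apply: (quasinorm_ball_locally_self_similar r0 nstar_ge0 nstarZ _ Cr0 CrB).
  by move=> u x0; exact: nstar_cvg.
have [x Sx xP] := self_similar_codec_lower_bound E D cS S0 B0 SB ssS.
by exists x.
Qed.
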